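(* Let $l$ be a positive integer, $\epsilon\in(0,1)$, $\varphi\in\mathbb{R}$, and let $N$ be a positive integer with $N\ge 5.34\ln(4l/\epsilon)$. Let $N_x\sim\mathrm{Bin}\big(N,(1+\cos(2\pi\varphi))/2\big)$ and $N_y\sim\mathrm{Bin}\big(N,(1+\sin(2\pi\varphi))/2\big)$ be independent. Then $$\Pr\Big(\Big|\frac{N_x}{N}-\frac{1+\cos(2\pi\varphi)}{2}\Big|\le 0.306\Big)\ge\sqrt{1-\epsilon/l},\qquad \Pr\Big(\Big|\frac{N_y}{N}-\frac{1+\sin(2\pi\varphi)}{2}\Big|\le 0.306\Big)\ge\sqrt{1-\epsilon/l},$$ and, with $t=\frac{1}{2\pi}\big(\mathrm{atan2}(2N_y/N-1,2N_x/N-1)\big)_{\mathrm{mod}\,2\pi}$ and $x=(t-1/6)_{\mathrm{mod}\,1}$, the probability that $\big((\varphi)_{\mathrm{mod}\,1}-x\big)_{\mathrm{mod}\,1}\in(0,1/3)$ is at least $1-\epsilon/l$.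
   Context: $N_x$ and $N_y$ model the numbers of outcomes $1$ in $N$ measurements of the qubit state $(|0\rangle+e^{i2\pi\varphi}|1\rangle)/\sqrt2$ with the POVMs $\{|\psi_x\rangle\langle\psi_x|,\mathbb{I}-|\psi_x\rangle\langle\psi_x|\}$, $|\psi_x\rangle=(|0\rangle+|1\rangle)/\sqrt2$, and $\{|\psi_y\rangle\langle\psi_y|,\mathbb{I}-|\psi_y\rangle\langle\psi_y|\}$, $|\psi_y\rangle=(|0\rangle+i|1\rangle)/\sqrt2$, respectively. $(a)_{\mathrm{mod}\,c}$ is the representative of $a$ in $[0,c)$; $\mathrm{atan2}(y,x)$ is the polar angle of $(x,y)$ (with any fixed convention at $(0,0)$). *)

From Stdlib Require Import Reals Lra ClassicalEpsilon.
Open Scope R_scope.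

(* Representative of a in [0, c) (for c > 0): a - c * floor(a/c).
   Int_part r = up r - 1 is the floor of r. *)
Definition fmod (a c : R) : R := a - c * IZR (Int_part (a / c)).

(* Polar angle of (x, y) in (-PI, PI]; value c0 at the origin
   (the convention at (0,0) is a parameter, quantified in the theorem). *)
Definition atan2 (c0 y x : R) : R :=
  if Rlt_dec 0 x then atan (y / x)
  else if Rlt_dec x 0 then
    (if Rle_dec 0 y then atan (y / x) + PI else atan (y / x) - PI)
  else if Rlt_dec 0 y then PI / 2
  else if Rlt_dec y 0 then - (PI / 2)
  else c0.

Definition binom_pmf (N : nat) (p : R) (k : nat) : R :=
  C N k * p ^ k * (1 - p) ^ (N - k).

Definition indic (P : Prop) : R :=
  if excluded_middle_informative P then 1 else 0.

(* Probability of the event E (Nx, Ny) when Nx ~ Bin(N, p) and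
   Ny ~ Bin(N, q) are independent: joint pmf is the product. *)
Definition prob_indep_binom (N : nat) (p q : R) (E : nat -> nat -> Prop) : R :=
  sum_f_R0 (fun a =>
    sum_f_R0 (fun b => binom_pmf N p a * binom_pmf N q b * indic (E a b)) N) N.

From Stdlib Require Import Reals Lra Lia ZArith ClassicalEpsilon.
From Coquelicot Require Import Coquelicot.
Open Scope R_scope.

(* Each count is binomial, so Hoeffding's inequality (Hoeffding's lemma for the moment
   generating function, then Markov's inequality for exp (+-s K)) bounds its deviation
   probability by 2 exp (-2 N 0.306^2) <= eps / (2 l), and 1 - eps / (2 l) >= sqrt (1 - eps / l).
   When both normalised counts are within 0.306 of their means, the point
   (2 N_x / N - 1, 2 N_y / N - 1) is closer than sqrt 3 / 2 to (cos 2 pi phi, sin 2 pi phi)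
   on the unit circle, so its polar angle is within pi / 3 of 2 pi phi modulo 2 pi, which
   after the shift by 1/6 puts phi - x (mod 1) in (0, 1/3).  By independence this joint event
   has probability at least (1 - eps / (2 l))^2 >= 1 - eps / l. *)

Lemma exp_le_compat x y : x <= y -> exp x <= exp y.
Proof. intros [Hlt | ->]; [left; apply exp_increasing | right]; auto. Qed.

Lemma deriv_nonpos_le_origin (f f' : R -> R) (s : R) :
  (forall x, derivable_pt_lim f x (f' x)) -> (forall x, 0 <= x -> f' x <= 0) ->
  0 <= s -> f s <= f 0.
Proof.
  intros Hf Hneg [Hs | <-]; [|lra].
  destruct (MVT_cor2 f f' 0 s Hs (fun x _ => Hf x)) as [x [Hmvt Hx]].
  assert (f' x <= 0) by (apply Hneg; lra).
  nra.
Qed.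

Lemma hoeffding_lemma_nonneg (p s : R) : 0 <= p <= 1 -> 0 <= s ->
  p * exp s + (1 - p) <= exp (s * p + s ^ 2 / 8).
Proof.
  intros Hp Hs.
  assert (Hpos : forall x, 0 < p * exp x + (1 - p)).
  { intro x. pose proof (exp_pos x). destruct (Req_dec p 0); [subst|]; nra. }
  (* [u x] is the success probability of the exponentially tilted Bernoulli law;
     it is the derivative of the cumulant generating function, and [u (1 - u) <= 1/4]. *)
  set (u := fun x => p * exp x / (p * exp x + (1 - p))).
  assert (Hu0 : u 0 = p) by (unfold u; rewrite exp_0; field; lra).
  assert (Hslope : forall x, 0 <= x -> u x - p - x / 4 <= 0).
  { intros x Hx.
    enough (u x - p - x / 4 <= u 0 - p - 0 / 4) by lra.
    apply (deriv_nonpos_le_origin (fun x => u x - p - x / 4)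
             (fun x => u x * (1 - u x) - 1 / 4)); auto.
    - intro y. apply is_derive_Reals. unfold u. specialize (Hpos y).
      auto_derive; [lra | field; lra].
    - intros y _. pose proof (pow2_ge_0 (u y - 1 / 2)). nra. }
  assert (Hcgf : ln (p * exp s + (1 - p)) - s * p - s ^ 2 / 8 <= 0).
  { assert (H0 : ln (p * exp 0 + (1 - p)) - 0 * p - 0 ^ 2 / 8 = 0).
    { rewrite exp_0. replace (p * 1 + (1 - p)) with 1 by ring. rewrite ln_1. lra. }
    rewrite <- H0.
    apply (deriv_nonpos_le_origin (fun x => ln (p * exp x + (1 - p)) - x * p - x ^ 2 / 8)
             (fun x => u x - p - x / 4)); auto.
    intro y. apply is_derive_Reals. unfold u. specialize (Hpos y).
    auto_derive; [lra | field; lra]. }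
  rewrite <- (exp_ln _ (Hpos s)). apply exp_le_compat. lra.
Qed.

Lemma hoeffding_lemma (p s : R) : 0 <= p <= 1 ->
  p * exp s + (1 - p) <= exp (s * p + s ^ 2 / 8).
Proof.
  intros Hp. destruct (Rle_lt_dec 0 s) as [Hs | Hs].
  { now apply hoeffding_lemma_nonneg. }
  (* Negative slopes reduce to positive ones for the complementary probability. *)
  assert (Hq : 0 <= 1 - p <= 1) by lra.
  pose proof (hoeffding_lemma_nonneg (1 - p) (- s) Hq ltac:(lra)) as Hneg.
  replace (p * exp s + (1 - p)) with (exp s * ((1 - p) * exp (- s) + (1 - (1 - p)))).
  2:{ rewrite exp_Ropp. field. apply Rgt_not_eq, exp_pos. }
  replace (s * p + s ^ 2 / 8) with (s + (- s * (1 - p) + (- s) ^ 2 / 8)) by field.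
  rewrite exp_plus. apply Rmult_le_compat_l; [left; apply exp_pos | exact Hneg].
Qed.

Lemma exp_mult_INR (s : R) (n : nat) : exp (s * INR n) = exp s ^ n.
Proof.
  induction n as [|n IH].
  - rewrite Rmult_0_r. apply exp_0.
  - rewrite S_INR, Rmult_plus_distr_l, Rmult_1_r, exp_plus, IH. simpl. ring.
Qed.

Lemma binom_pmf_ge0 (N : nat) (p : R) (k : nat) : 0 <= p <= 1 -> 0 <= binom_pmf N p k.
Proof.
  intros Hp. unfold binom_pmf, Binomial.C.
  assert (0 < INR (fact k) * INR (fact (N - k))) by (apply Rmult_lt_0_compat; apply INR_fact_lt_0).
  repeat apply Rmult_le_pos; try apply pos_INR; try (apply pow_le; lra).
  left. now apply Rinv_0_lt_compat.
Qed.

Lemma binom_mgf (N : nat) (p s : R) :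
  sum_f_R0 (fun k => binom_pmf N p k * exp (s * INR k)) N = (p * exp s + (1 - p)) ^ N.
Proof.
  rewrite binomial. apply sum_eq. intros k _. unfold binom_pmf.
  rewrite exp_mult_INR, Rpow_mult_distr. ring.
Qed.

Lemma binom_pmf_sum (N : nat) (p : R) : sum_f_R0 (binom_pmf N p) N = 1.
Proof.
  rewrite <- (pow1 N). replace 1 with (p + (1 - p)) at 1 by ring.
  rewrite binomial. apply sum_eq. intros k _. unfold binom_pmf. ring.
Qed.

Lemma binom_mgf_le (N : nat) (p s : R) : 0 <= p <= 1 ->
  sum_f_R0 (fun k => binom_pmf N p k * exp (s * INR k)) N <= exp (INR N * (s * p + s ^ 2 / 8)).
Proof.
  intros Hp. rewrite binom_mgf, (Rmult_comm (INR N)), exp_mult_INR.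
  apply pow_incr. split; [pose proof (exp_pos s); nra | now apply hoeffding_lemma].
Qed.

Lemma indic_true (P : Prop) : P -> indic P = 1.
Proof. intros HP. unfold indic. destruct (excluded_middle_informative P); tauto. Qed.

Lemma indic_false (P : Prop) : ~ P -> indic P = 0.
Proof. intros HP. unfold indic. destruct (excluded_middle_informative P); tauto. Qed.

Lemma indic_ge0 (P : Prop) : 0 <= indic P.
Proof. unfold indic. destruct (excluded_middle_informative P); lra. Qed.

Definition binom_prob (N : nat) (p : R) (A : nat -> Prop) : R :=
  sum_f_R0 (fun k => binom_pmf N p k * indic (A k)) N.

(* Markov's inequality for the two exponential moments, in pointwise form. *)
Lemma indic_abs_dev_ge (N k : nat) (p d s : R) : (0 < N)%nat -> 0 <= s ->
  1 - exp (s * (INR k - INR N * (p + d))) - exp (- s * (INR k - INR N * (p - d)))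
  <= indic (Rabs (INR k / INR N - p) <= d).
Proof.
  intros HN Hs.
  assert (HNr : 0 < INR N) by (apply lt_0_INR; lia).
  pose proof (exp_pos (s * (INR k - INR N * (p + d)))).
  pose proof (exp_pos (- s * (INR k - INR N * (p - d)))).
  destruct (Rle_dec (Rabs (INR k / INR N - p)) d) as [Hdev | Hdev].
  { rewrite indic_true by exact Hdev. lra. }
  rewrite indic_false by exact Hdev.
  assert (Hk : INR k < INR N * (p - d) \/ INR N * (p + d) < INR k).
  { rewrite Rabs_le_between in Hdev.
    destruct (Rlt_or_le (INR k / INR N - p) (- d)) as [Hlt | Hle].
    - left. apply (Rmult_lt_reg_r (/ INR N)); [now apply Rinv_0_lt_compat |].
      field_simplify; lra.
    - right. apply (Rmult_lt_reg_r (/ INR N)); [now apply Rinv_0_lt_compat |].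
      field_simplify; lra. }
  destruct Hk as [Hk | Hk].
  - assert (1 <= exp (- s * (INR k - INR N * (p - d)))).
    { rewrite <- exp_0. apply exp_le_compat. nra. }
    lra.
  - assert (1 <= exp (s * (INR k - INR N * (p + d)))).
    { rewrite <- exp_0. apply exp_le_compat. nra. }
    lra.
Qed.

Lemma binom_hoeffding (N : nat) (p d : R) : (0 < N)%nat -> 0 <= p <= 1 -> 0 <= d ->
  1 - 2 * exp (- 2 * INR N * d ^ 2) <= binom_prob N p (fun k => Rabs (INR k / INR N - p) <= d).
Proof.
  intros HN Hp Hd.
  (* The slope minimising [s^2 / 8 - s d]. *)
  set (s := 4 * d).
  set (M := fun t => sum_f_R0 (fun k => binom_pmf N p k * exp (t * INR k)) N).
  assert (Hsum : sum_f_R0 (fun k => binom_pmf N p k *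
             (1 - exp (s * (INR k - INR N * (p + d))) - exp (- s * (INR k - INR N * (p - d))))) N
           = sum_f_R0 (binom_pmf N p) N
             - exp (- s * INR N * (p + d)) * M s - exp (s * INR N * (p - d)) * M (- s)).
  { unfold M. rewrite !scal_sum, <- !minus_sum.
    apply sum_eq. intros k _.
    replace (s * (INR k - INR N * (p + d))) with (s * INR k + - s * INR N * (p + d)) by ring.
    replace (- s * (INR k - INR N * (p - d))) with (- s * INR k + s * INR N * (p - d)) by ring.
    rewrite !exp_plus. ring. }
  assert (Hup : exp (- s * INR N * (p + d)) * M s <= exp (- 2 * INR N * d ^ 2)).
  { apply Rle_trans with (exp (- s * INR N * (p + d)) * exp (INR N * (s * p + s ^ 2 / 8))).
    - apply Rmult_le_compat_l; [left; apply exp_pos | now apply binom_mgf_le].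
    - rewrite <- exp_plus. apply exp_le_compat. unfold s. right. field. }
  assert (Hlow : exp (s * INR N * (p - d)) * M (- s) <= exp (- 2 * INR N * d ^ 2)).
  { apply Rle_trans with (exp (s * INR N * (p - d)) * exp (INR N * (- s * p + (- s) ^ 2 / 8))).
    - apply Rmult_le_compat_l; [left; apply exp_pos | now apply binom_mgf_le].
    - rewrite <- exp_plus. apply exp_le_compat. unfold s. right. field. }
  apply Rle_trans with (1 - exp (- s * INR N * (p + d)) * M s - exp (s * INR N * (p - d)) * M (- s));
    [lra |].
  rewrite <- (binom_pmf_sum N p), <- Hsum. apply sum_Rle. intros k _.
  apply Rmult_le_compat_l; [now apply binom_pmf_ge0 |].
  apply indic_abs_dev_ge; [exact HN | unfold s; lra].
Qed.

Lemma prob_indep_binom_fst (N : nat) (p q : R) (A : nat -> Prop) :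
  prob_indep_binom N p q (fun a _ => A a) = binom_prob N p A.
Proof.
  apply sum_eq. intros a _. cbv beta.
  rewrite <- (Rmult_1_r (binom_pmf N p a * indic (A a))), <- (binom_pmf_sum N q), scal_sum.
  apply sum_eq. intros b _. ring.
Qed.

Lemma prob_indep_binom_snd (N : nat) (p q : R) (B : nat -> Prop) :
  prob_indep_binom N p q (fun _ b => B b) = binom_prob N q B.
Proof.
  unfold prob_indep_binom.
  rewrite <- (Rmult_1_l (binom_prob N q B)), <- (binom_pmf_sum N p), Rmult_comm, scal_sum.
  apply sum_eq. intros a _. unfold binom_prob. rewrite scal_sum.
  apply sum_eq. intros b _. ring.
Qed.

Lemma prob_indep_binom_ge_mul (N : nat) (p q : R) (A B : nat -> Prop) (E : nat -> nat -> Prop) :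
  0 <= p <= 1 -> 0 <= q <= 1 -> (forall a b, A a -> B b -> E a b) ->
  binom_prob N p A * binom_prob N q B <= prob_indep_binom N p q E.
Proof.
  intros Hp Hq HE. unfold binom_prob at 1. rewrite Rmult_comm, scal_sum.
  apply sum_Rle. intros a _. unfold binom_prob. rewrite scal_sum.
  apply sum_Rle. intros b _.
  pose proof (binom_pmf_ge0 N p a Hp). pose proof (binom_pmf_ge0 N q b Hq).
  pose proof (indic_ge0 (E a b)).
  destruct (excluded_middle_informative (A a /\ B b)) as [[HA HB] | HAB].
  - rewrite (indic_true _ HA), (indic_true _ HB), (indic_true _ (HE a b HA HB)). lra.
  - assert (Hzero : indic (A a) * indic (B b) = 0).
    { destruct (excluded_middle_informative (A a)) as [HA | HA].
      - rewrite (indic_false (B b)) by tauto. ring.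
      - rewrite (indic_false (A a)) by tauto. ring. }
    replace (binom_pmf N q b * indic (B b) * (binom_pmf N p a * indic (A a)))
      with (binom_pmf N p a * binom_pmf N q b * (indic (A a) * indic (B b))) by ring.
    rewrite Hzero, Rmult_0_r. apply Rmult_le_pos; [apply Rmult_le_pos |]; assumption.
Qed.

Lemma fmod_sub_mult (a c : R) : exists k : Z, fmod a c = a - c * IZR k.
Proof. now exists (Int_part (a / c)). Qed.

Lemma fmod_1_add_IZR (y : R) (k : Z) : 0 <= y < 1 -> fmod (y + IZR k) 1 = y.
Proof.
  intros Hy. unfold fmod. rewrite Rdiv_1_r, <- (Int_part_spec (y + IZR k) k) by lra. ring.
Qed.

Lemma cos_sub_2PI_mult (x : R) (k : Z) : cos (x - 2 * PI * IZR k) = cos x.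
Proof.
  destruct (Z_le_gt_dec 0 k) as [Hk | Hk].
  - rewrite <- (Z2Nat.id k Hk), <- INR_IZR_INZ.
    rewrite <- (cos_period (x - 2 * PI * INR (Z.to_nat k)) (Z.to_nat k)). f_equal. ring.
  - replace k with (- Z.of_nat (Z.to_nat (- k)))%Z by lia.
    rewrite opp_IZR, <- INR_IZR_INZ, <- (cos_period x (Z.to_nat (- k))). f_equal. ring.
Qed.

Lemma cos_gt_half_near_2PI_mult (g : R) :
  1 / 2 < cos g -> exists m : Z, Rabs (g - 2 * PI * IZR m) < PI / 3.
Proof.
  intros Hg. pose proof PI_RGT_0.
  set (t := (g + PI) / (2 * PI)).
  exists (Int_part t). set (h := g - 2 * PI * IZR (Int_part t)).
  destruct (base_Int_part t) as [Hlo Hhi].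
  assert (Hg_t : g = 2 * PI * t - PI) by (unfold t; field; lra).
  assert (Hh : Rabs h <= PI) by (apply Rabs_le; unfold h; nra).
  assert (Hcos : cos (Rabs h) = cos g).
  { unfold Rabs. destruct (Rcase_abs h); [rewrite cos_neg |]; apply cos_sub_2PI_mult. }
  destruct (Rlt_or_le (Rabs h) (PI / 3)) as [Hlt | Hge]; [exact Hlt | exfalso].
  assert (cos (Rabs h) <= cos (PI / 3)) by (apply cos_decr_1; try apply Rabs_pos; lra).
  rewrite cos_PI3 in *. lra.
Qed.

Lemma atan2_polar (c0 X Y : R) : X <> 0 \/ Y <> 0 ->
  exists r, 0 < r /\ X = r * cos (atan2 c0 Y X) /\ Y = r * sin (atan2 c0 Y X).
Proof.
  intros HXY. unfold atan2.
  assert (Hsqrt : 0 < sqrt (1 + (Y / X)²)).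
  { apply sqrt_lt_R0. pose proof (Rle_0_sqr (Y / X)). lra. }
  destruct (Rlt_dec 0 X) as [HX | HX].
  { exists (X * sqrt (1 + (Y / X)²)). rewrite cos_atan, sin_atan.
    split; [nra | split; field; lra]. }
  destruct (Rlt_dec X 0) as [HX' | HX'].
  { exists (- X * sqrt (1 + (Y / X)²)).
    destruct (Rle_dec 0 Y);
      [rewrite neg_cos, neg_sin | rewrite cos_minus, sin_minus, cos_PI, sin_PI];
      rewrite cos_atan, sin_atan; (split; [nra | split; field; lra]). }
  assert (X = 0) as -> by lra.
  destruct (Rlt_dec 0 Y).
  { exists Y. rewrite cos_PI2, sin_PI2. lra. }
  destruct (Rlt_dec Y 0).
  { exists (- Y). rewrite cos_neg, sin_neg, cos_PI2, sin_PI2. lra. }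
  exfalso. destruct HXY; lra.
Qed.

Lemma cos_sub_gt_half (r a b : R) : 0 < r ->
  (r * cos a - cos b) ^ 2 + (r * sin a - sin b) ^ 2 < 3 / 4 -> 1 / 2 < cos (a - b).
Proof.
  intros Hr Hdist. rewrite cos_minus.
  pose proof (sin2_cos2 a). pose proof (sin2_cos2 b). unfold Rsqr in *.
  (* The squared distance is [r^2 - 2 r cos (a - b) + 1], and [r^2 + 1/4 >= r]. *)
  assert (r ^ 2 - 2 * r * (cos a * cos b + sin a * sin b) + 1 < 3 / 4) by nra.
  pose proof (pow2_ge_0 (r - 1 / 2)).
  nra.
Qed.

Lemma atan2_cos_sub_gt_half (c0 X Y th : R) :
  (X - cos th) ^ 2 + (Y - sin th) ^ 2 < 3 / 4 -> 1 / 2 < cos (atan2 c0 Y X - th).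
Proof.
  intros Hdist.
  assert (HXY : X <> 0 \/ Y <> 0).
  { destruct (Req_dec X 0) as [-> | HX]; [| now left].
    destruct (Req_dec Y 0) as [-> | HY]; [| now right].
    pose proof (sin2_cos2 th). unfold Rsqr in *. nra. }
  destruct (atan2_polar c0 X Y HXY) as (r & Hr & HX & HY).
  apply (cos_sub_gt_half r); [exact Hr |]. rewrite <- HX, <- HY. exact Hdist.
Qed.

Lemma fmod_window_of_cos_gt_half (phi al : R) : 1 / 2 < cos (al - 2 * PI * phi) ->
  0 < fmod (fmod phi 1 - fmod (fmod al (2 * PI) / (2 * PI) - 1 / 6) 1) 1 < 1 / 3.
Proof.
  intros Hcos. pose proof PI_RGT_0.
  destruct (cos_gt_half_near_2PI_mult _ Hcos) as [m Hm].
  set (e := al - 2 * PI * phi - 2 * PI * IZR m) in Hm.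
  destruct (fmod_sub_mult al (2 * PI)) as [j1 ->].
  destruct (fmod_sub_mult ((al - 2 * PI * IZR j1) / (2 * PI) - 1 / 6) 1) as [j2 ->].
  destruct (fmod_sub_mult phi 1) as [j3 ->].
  set (y := 1 / 6 - e / (2 * PI)).
  replace (phi - 1 * IZR j3 - ((al - 2 * PI * IZR j1) / (2 * PI) - 1 / 6 - 1 * IZR j2))
    with (y + IZR (j1 + j2 - j3 - m))
    by (unfold y, e; rewrite !minus_IZR, !plus_IZR; field; lra).
  assert (He : - (1 / 6) < e / (2 * PI) < 1 / 6).
  { apply Rabs_def2 in Hm.
    split; apply (Rmult_lt_reg_r (2 * PI)); try lra; field_simplify; lra. }
  rewrite fmod_1_add_IZR by (unfold y; lra).
  unfold y. lra.
Qed.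

Lemma phase_window_of_deviations (c0 phi : R) (N a b : nat) : (0 < N)%nat ->
  Rabs (INR a / INR N - (1 + cos (2 * PI * phi)) / 2) <= 306 / 1000 ->
  Rabs (INR b / INR N - (1 + sin (2 * PI * phi)) / 2) <= 306 / 1000 ->
  0 < fmod (fmod phi 1 - fmod (fmod (atan2 c0 (2 * INR b / INR N - 1) (2 * INR a / INR N - 1))
                                    (2 * PI) / (2 * PI) - 1 / 6) 1) 1 < 1 / 3.
Proof.
  intros HN Ha Hb.
  assert (HNr : INR N <> 0) by (apply not_0_INR; lia).
  apply fmod_window_of_cos_gt_half, atan2_cos_sub_gt_half.
  rewrite Rabs_le_between in Ha, Hb.
  replace (2 * INR a / INR N - 1 - cos (2 * PI * phi))
    with (2 * (INR a / INR N - (1 + cos (2 * PI * phi)) / 2)) by (field; exact HNr).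
  replace (2 * INR b / INR N - 1 - sin (2 * PI * phi))
    with (2 * (INR b / INR N - (1 + sin (2 * PI * phi)) / 2)) by (field; exact HNr).
  nra.
Qed.

(* [2 * 0.306^2 * 5.34 > 1], so the sample size makes each Hoeffding tail at most [eps / (4 l)]. *)
Lemma hoeffding_sample_size (l N : nat) (eps : R) : (0 < l)%nat -> 0 < eps < 1 ->
  INR N >= 534 / 100 * ln (4 * INR l / eps) ->
  2 * exp (- 2 * INR N * (306 / 1000) ^ 2) <= eps / INR l / 2.
Proof.
  intros Hl Heps Hsize.
  assert (Hlr : 1 <= INR l) by (apply (le_INR 1); lia).
  assert (Hratio : 1 < 4 * INR l / eps).
  { apply (Rmult_lt_reg_r eps); [lra |]. field_simplify; lra. }
  assert (Hln : 0 < ln (4 * INR l / eps)) by (rewrite <- ln_1; apply ln_increasing; lra).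
  assert (Hexp : exp (- 2 * INR N * (306 / 1000) ^ 2) <= exp (- ln (4 * INR l / eps)))
    by (apply exp_le_compat; lra).
  rewrite exp_Ropp, exp_ln in Hexp by lra.
  replace (eps / INR l / 2) with (2 * / (4 * INR l / eps)) by (field; lra).
  lra.
Qed.

Lemma sqrt_1_sub_le (d : R) : 0 <= d <= 1 -> sqrt (1 - d) <= 1 - d / 2.
Proof.
  intros Hd. rewrite <- (sqrt_pow2 (1 - d / 2)) by lra.
  apply sqrt_le_1_alt. nra.
Qed.

Theorem mainTheorem3 (c0 : R) (l : nat) (eps phi : R) (N : nat) :
  (0 < l)%nat -> 0 < eps < 1 -> (0 < N)%nat ->
  INR N >= 534 / 100 * ln (4 * INR l / eps) ->
  let px := (1 + cos (2 * PI * phi)) / 2 in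
  let py := (1 + sin (2 * PI * phi)) / 2 in
  prob_indep_binom N px py
    (fun a _ => Rabs (INR a / INR N - px) <= 306 / 1000)
    >= sqrt (1 - eps / INR l) /\
  prob_indep_binom N px py
    (fun _ b => Rabs (INR b / INR N - py) <= 306 / 1000)
    >= sqrt (1 - eps / INR l) /\
  prob_indep_binom N px py
    (fun a b =>
       let t := fmod (atan2 c0 (2 * INR b / INR N - 1) (2 * INR a / INR N - 1))
                     (2 * PI) / (2 * PI) in
       let x := fmod (t - 1 / 6) 1 in
       0 < fmod (fmod phi 1 - x) 1 < 1 / 3)
    >= 1 - eps / INR l.
Proof.
  intros Hl Heps HN Hsize px py.
  assert (Hdelta : 0 <= eps / INR l <= 1).
  { assert (1 <= INR l) by (apply (le_INR 1); lia).
    split; [apply Rdiv_le_0_compat | apply (Rdiv_le_1 eps (INR l))]; lra. }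
  assert (Hpx : 0 <= px <= 1) by (unfold px; pose proof (COS_bound (2 * PI * phi)); lra).
  assert (Hpy : 0 <= py <= 1) by (unfold py; pose proof (SIN_bound (2 * PI * phi)); lra).
  pose proof (hoeffding_sample_size l N eps Hl Heps Hsize) as Htail.
  pose proof (binom_hoeffding N px (306 / 1000) HN Hpx ltac:(lra)) as Hx.
  pose proof (binom_hoeffding N py (306 / 1000) HN Hpy ltac:(lra)) as Hy.
  pose proof (sqrt_1_sub_le _ Hdelta) as Hsqrt.
  rewrite prob_indep_binom_fst, prob_indep_binom_snd.
  split; [lra | split; [lra |]].
  apply Rle_ge, Rle_trans with ((1 - eps / INR l / 2) * (1 - eps / INR l / 2)); [nra |].
  eapply Rle_trans; [| apply prob_indep_binom_ge_mul with (1 := Hpx) (2 := Hpy)].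
  2: exact (fun a b => phase_window_of_deviations c0 phi N a b HN).
  fold px py. apply Rmult_le_compat; lra.
Qed.
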